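(* For every $q^s\in\mathbb{R}^{d_s}$ and every $i=1,\dots,d_s$, $F_3(q^s)^TG_{2,i}(q^s)=G_{2,i}(q^s)^TF_3(q^s)$, i.e. $F_3^TG_{2,i}$ is symmetric.
   Context: Let $d_f,d_s\ge1$, $\epsilon>0$, and let $K:\mathbb{R}^{d_s}\to\mathbb{R}^{d_f\times d_f}$ be continuously differentiable with symmetric positive definite values. Let $H>0$, let $n\ge1$ be an integer and $h=H/2^n$. For $q^s\in\mathbb{R}^{d_s}$ write $a=\epsilon^{-1}K(q^s)$ and $b_i=\epsilon^{-1}\partial K(q^s)/\partial q^s_i$, and define the $2d_f\times 2d_f$ block matrices $$A(q^s)=\begin{bmatrix} I-\tfrac{h^2}{2}a & h\,a\\ -h\big(I-\tfrac{h^2}{4}a\big) & I-\tfrac{h^2}{2}a\end{bmatrix},\quad C(q^s)=\begin{bmatrix} I-\tfrac{h^2}{2}a & h\big(I-\tfrac{h^2}{4}a\big)\\ -h\,a & I-\tfrac{h^2}{2}a\end{bmatrix},$$ $$B_i(q^s)=\begin{bmatrix} h\,b_i & \tfrac{h^2}{2}b_i\\ -\tfrac{h^2}{2}b_i & -\tfrac{h^3}{4}b_i\end{bmatrix}.$$ Define $F_2,G_{2,i},F_3$ by $\begin{bmatrix}F_2 & G_{2,i}\\0&F_3\end{bmatrix}=\begin{bmatrix}A&B_i\\0&C\end{bmatrix}^{2^n}$. *)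

From Stdlib Require Import Reals.
From mathcomp Require Import ssreflect ssrfun ssrbool eqtype ssrnat seq choice fintype.
Set Implicit Arguments. Unset Strict Implicit. Unset Printing Implicit Defensive.
Local Open Scope R_scope.

Definition vec (n : nat) := 'I_n -> R.
Definition mx (n : nat) := 'I_n -> 'I_n -> R.

Definition rsum (n : nat) (f : 'I_n -> R) : R :=
  foldr Rplus 0 (map f (enum 'I_n)).

Definition mmul n (A B : mx n) : mx n := fun i j => rsum (fun k => A i k * B k j).
Definition madd n (A B : mx n) : mx n := fun i j => A i j + B i j.
Definition mopp n (A : mx n) : mx n := fun i j => - A i j.
Definition msub n (A B : mx n) : mx n := madd A (mopp B).
Definition mscale n (c : R) (A : mx n) : mx n := fun i j => c * A i j.
Definition mid n : mx n := fun i j => if i == j then 1 else 0.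
Arguments mid : clear implicits.
Definition mtr n (A : mx n) : mx n := fun i j => A j i.
Fixpoint mpow n (A : mx n) (k : nat) : mx n :=
  match k with O => mid n | S k' => mmul A (mpow A k') end.

Definition block n (A B C D : mx n) : mx (n + n) := fun i j =>
  match split i, split j with
  | inl i', inl j' => A i' j'
  | inl i', inr j' => B i' j'
  | inr i', inl j' => C i' j'
  | inr i', inr j' => D i' j'
  end.
Definition blk11 n (X : mx (n + n)) : mx n := fun i j => X (lshift n i) (lshift n j).
Definition blk12 n (X : mx (n + n)) : mx n := fun i j => X (lshift n i) (rshift n j).
Definition blk22 n (X : mx (n + n)) : mx n := fun i j => X (rshift n i) (rshift n j).

Definition spd n (M : mx n) : Prop :=
  mtr M = M /\
  forall x : vec n, (exists i, x i <> 0) -> 0 < rsum (fun i => rsum (fun j => x i * M i j * x j)).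

Definition shift d (q : vec d) (i : 'I_d) (t : R) : vec d :=
  fun k => if k == i then q k + t else q k.

Definition cont_on d (f : vec d -> R) : Prop :=
  forall q e, 0 < e -> exists delta, 0 < delta /\
    forall q', (forall k, Rabs (q' k - q k) < delta) -> Rabs (f q' - f q) < e.

Definition C1_mx ds df (K : vec ds -> mx df) (dK : 'I_ds -> vec ds -> mx df) : Prop :=
  (forall i q j k, derivable_pt_lim (fun t => K (shift q i t) j k) 0 (dK i q j k)) /\
  (forall i j k, cont_on (fun q => dK i q j k)).

Section Mats.
Variables (df ds : nat) (eps : R) (K : vec ds -> mx df) (dK : 'I_ds -> vec ds -> mx df) (h : R).

Definition amat (q : vec ds) : mx df := mscale (/ eps) (K q).
Definition bmat (i : 'I_ds) (q : vec ds) : mx df := mscale (/ eps) (dK i q).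

Definition Amat q : mx (df + df) :=
  let a := amat q in
  block (msub (mid df) (mscale (h^2/2) a)) (mscale h a)
        (mscale (- h) (msub (mid df) (mscale (h^2/4) a))) (msub (mid df) (mscale (h^2/2) a)).
Definition Cmat q : mx (df + df) :=
  let a := amat q in
  block (msub (mid df) (mscale (h^2/2) a)) (mscale h (msub (mid df) (mscale (h^2/4) a)))
        (mscale (- h) a) (msub (mid df) (mscale (h^2/2) a)).
Definition Bmat i q : mx (df + df) :=
  let b := bmat i q in
  block (mscale h b) (mscale (h^2/2) b) (mscale (-(h^2/2)) b) (mscale (-(h^3/4)) b).

Definition zero_mx n : mx n := fun _ _ => 0.
Arguments zero_mx : clear implicits.

Definition bigM i q : mx ((df + df) + (df + df)) :=
  block (Amat q) (Bmat i q) (zero_mx (df + df)) (Cmat q).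
Definition bigP (n : nat) i q := mpow (bigM i q) (2 ^ n)%nat.

Definition F2 n i q : mx (df + df) := blk11 (bigP n i q).
Definition G2 n i q : mx (df + df) := blk12 (bigP n i q).
Definition F3 n i q : mx (df + df) := blk22 (bigP n i q).
End Mats.

(* Let J = [[0, -I], [I, 0]].  A block upper-triangular matrix M = [[A, B], [0, C]]
   is symplectic (M^T J M = J) as soon as C^T A = I and C^T B is symmetric, and
   symplectic matrices are closed under products, so M^(2^n) is symplectic too.
   For any symplectic M = [[X, G], [Z, F]], the lower-right block of M^T J M = J
   reads F^T G - G^T F = 0.
   For the Verlet matrices all blocks of A and C are polynomials in the symmetric
   matrix a, hence commute: C^T is the block adjugate of A, whose "determinant"
   (1 - h^2/2 a)^2 + h^2 a (1 - h^2/4 a) equals I, and C^T B turns out to be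
   [[h b, h^2/2 b], [h^2/2 b, h^3/4 b]], symmetric because b = dK/dq_i / eps is. *)

From Stdlib Require Import Reals Lra FunctionalExtensionality.
From mathcomp Require Import ssreflect ssrfun ssrbool eqtype ssrnat seq fintype.
From mathcomp Require Import bigop ssralg matrix poly mxpoly Rstruct ring.
Set Implicit Arguments. Unset Strict Implicit. Unset Printing Implicit Defensive.
Import GRing.Theory.

Section Symplectic.
Local Open Scope ring_scope.
Variables (R : comNzRingType) (n : nat).

Definition sympl_form : 'M[R]_(n + n) := block_mx 0 (- 1%:M) 1%:M 0.

Definition symplectic (M : 'M[R]_(n + n)) := M^T *m sympl_form *m M = sympl_form.

Lemma symplectic1 : symplectic 1%:M.
Proof. by rewrite /symplectic trmx1 mul1mx mulmx1. Qed.

Lemma symplecticM M N : symplectic M -> symplectic N -> symplectic (M *m N).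
Proof.
by move=> sM sN; rewrite /symplectic trmx_mul !mulmxA -(mulmxA N^T) -(mulmxA N^T) sM.
Qed.

Lemma symplecticX M k : symplectic M -> symplectic (M ^+ k).
Proof.
move=> sM; elim: k => [|k IHk]; first exact: symplectic1.
by rewrite exprS -mulmxE; apply: symplecticM.
Qed.

Lemma symplectic_block_utri (A B C : 'M[R]_n) :
  C^T *m A = 1%:M -> (C^T *m B)^T = C^T *m B -> symplectic (block_mx A B 0 C).
Proof.
move=> CA CBsym; rewrite /symplectic /sympl_form tr_block_mx trmx0 !mulmx_block.
rewrite !(mul0mx, mulmx0, mul1mx, mulmx1, mulNmx, mulmxN, add0r, addr0, trmx0).
have tCA : A^T *m C = 1%:M by rewrite -[LHS]trmxK trmx_mul trmxK CA trmx1.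
have tCB : B^T *m C = C^T *m B by rewrite -{1}CBsym trmx_mul trmxK.
by rewrite tCA tCB CA subrr.
Qed.

Lemma symplectic_corner_sym M : symplectic M ->
  (drsubmx M)^T *m ursubmx M = (ursubmx M)^T *m drsubmx M.
Proof.
rewrite /symplectic /sympl_form -[in X in X -> _](submxK M).
rewrite tr_block_mx !mulmx_block.
rewrite !(mul0mx, mulmx0, mul1mx, mulmx1, mulNmx, mulmxN, add0r, addr0).
by move/(congr1 drsubmx)/eqP; rewrite !block_mxKdr subr_eq0 => /eqP.
Qed.
End Symplectic.

Section PolyBlocks.
Local Open Scope ring_scope.
Variables (R : comNzRingType) (n : nat) (a : 'M[R]_n.+1).
Local Notation ev := (horner_mx a).

Lemma horner_mx_CM c p : ev (c%:P * p) = c *: ev p.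
Proof. by rewrite rmorphM /= horner_mx_C -mulmxE mul_scalar_mx. Qed.

Lemma trmx_horner_mx_sym p : a^T = a -> (ev p)^T = ev p.
Proof.
move=> asym; elim/poly_ind: p => [|p c IHp]; first by rewrite rmorph0 trmx0.
rewrite rmorphD rmorphM /= horner_mx_X horner_mx_C linearD /= tr_scalar_mx.
by rewrite -mulmxE trmx_mul IHp asym (comm_mx_horner _ (erefl (a *m a))).
Qed.

Definition poly_block (p11 p12 p21 p22 : {poly R}) : 'M[R]_(n.+1 + n.+1) :=
  block_mx (ev p11) (ev p12) (ev p21) (ev p22).

Lemma mul_poly_block p11 p12 p21 p22 q11 q12 q21 q22 :
  poly_block p11 p12 p21 p22 *m poly_block q11 q12 q21 q22 =
  poly_block (p11 * q11 + p12 * q21) (p11 * q12 + p12 * q22)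
             (p21 * q11 + p22 * q21) (p21 * q12 + p22 * q22).
Proof. by rewrite mulmx_block /poly_block !mulmxE !rmorphD !rmorphM. Qed.

Lemma poly_block1 : poly_block 1 0 0 1 = 1%:M.
Proof. by rewrite /poly_block rmorph0 rmorph1 -scalar_mx_block. Qed.

Lemma tr_poly_block p11 p12 p21 p22 : a^T = a ->
  (poly_block p11 p12 p21 p22)^T = poly_block p11 p21 p12 p22.
Proof. by move=> asym; rewrite tr_block_mx !trmx_horner_mx_sym. Qed.

Lemma poly_block_C_mul_diag (x y z w : R) (b : 'M[R]_n.+1) :
  poly_block x%:P y%:P z%:P w%:P *m block_mx b 0 0 b =
  block_mx (x *: b) (y *: b) (z *: b) (w *: b).
Proof.
by rewrite mulmx_block !(mulmx0, addr0, add0r) /poly_block !horner_mx_C !mul_scalar_mx.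
Qed.

End PolyBlocks.

Section Verlet.
Local Open Scope ring_scope.
Variables (R : comNzRingType) (n : nat) (h c d e : R) (a b : 'M[R]_n.+1).

Definition verletA : 'M[R]_(n.+1 + n.+1) :=
  block_mx (1%:M - c *: a) (h *: a) ((- h) *: (1%:M - d *: a)) (1%:M - c *: a).
Definition verletC : 'M[R]_(n.+1 + n.+1) :=
  block_mx (1%:M - c *: a) (h *: (1%:M - d *: a)) ((- h) *: a) (1%:M - c *: a).
Definition verletB : 'M[R]_(n.+1 + n.+1) :=
  block_mx (h *: b) (c *: b) ((- c) *: b) ((- e) *: b).

Local Notation alpha := (1 - c%:P * 'X).
Local Notation beta := (1 - d%:P * 'X).

Lemma verletA_poly : verletA = poly_block a alpha (h%:P * 'X) ((- h)%:P * beta) alpha.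
Proof.
by rewrite /poly_block !horner_mx_CM !rmorphB !rmorph1 /= !horner_mx_CM horner_mx_X.
Qed.

Lemma verletC_poly : verletC = poly_block a alpha (h%:P * beta) ((- h)%:P * 'X) alpha.
Proof.
by rewrite /poly_block !horner_mx_CM !rmorphB !rmorph1 /= !horner_mx_CM horner_mx_X.
Qed.

Lemma verletB_poly :
  verletB = poly_block a h%:P c%:P (- c)%:P (- e)%:P *m block_mx b 0 0 b.
Proof. by rewrite poly_block_C_mul_diag. Qed.

Hypothesis asym : a^T = a.
(* [u] stands for [h/2]: [c = h^2/2], [d = h^2/4], [e = h^3/4] become polynomial
   in [u], so the block identities below are plain ring identities. *)
Variable u : R.
Hypotheses (hE : h = u + u) (cE : c = h * u) (dE : d = u * u).

Lemma verletC_tr_mulA : verletC^T *m verletA = 1%:M.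
Proof.
rewrite verletA_poly verletC_poly tr_poly_block // mul_poly_block.
by rewrite -(poly_block1 a); congr poly_block; rewrite ?cE ?dE hE; ring.
Qed.

Hypothesis eE : e = h * u * u.

Lemma verletC_tr_mulB : verletC^T *m verletB =
  block_mx (h *: b) (c *: b) (c *: b) (e *: b).
Proof.
rewrite verletB_poly verletC_poly tr_poly_block // mulmxA mul_poly_block.
rewrite -(poly_block_C_mul_diag a); congr (_ *m _); congr poly_block;
  by rewrite ?eE ?cE ?dE hE; ring.
Qed.

Lemma verletC_tr_mulB_sym : b^T = b ->
  (verletC^T *m verletB)^T = verletC^T *m verletB.
Proof. by move=> bsym; rewrite verletC_tr_mulB tr_block_mx !linearZ /= bsym. Qed.
End Verlet.

(* Scalars passed to these from [R_scope] must stay Stdlib reals: read in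
   [ring_scope], [h^2/4] would use [4%:R], which is not convertible to [IZR 4]. *)
Arguments verletA : clear scopes.
Arguments verletB : clear scopes.
Arguments verletC : clear scopes.

Section MxOfFun.
Local Open Scope ring_scope.

Definition Mx n (A : mx n) : 'M[R]_n := \matrix_(i, j) A i j.

Lemma Mx_inj n : injective (@Mx n).
Proof.
move=> A B /matrixP eqAB; apply: functional_extensionality => i.
by apply: functional_extensionality => j; have := eqAB i j; rewrite !mxE.
Qed.

Lemma rsumE n (f : 'I_n -> R) : rsum f = \sum_(k < n) f k.
Proof. by rewrite /rsum foldrE big_map big_enum. Qed.

Lemma Mx_mmul n (A B : mx n) : Mx (mmul A B) = Mx A *m Mx B.
Proof.
apply/matrixP => i j; rewrite !mxE /mmul rsumE.
by apply: eq_bigr => k _; rewrite !mxE.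
Qed.

Lemma Mx_mtr n (A : mx n) : Mx (mtr A) = (Mx A)^T.
Proof. by apply/matrixP => i j; rewrite !mxE. Qed.

Lemma Mx_msub n (A B : mx n) : Mx (msub A B) = Mx A - Mx B.
Proof. by apply/matrixP => i j; rewrite !mxE. Qed.

Lemma Mx_mscale n c (A : mx n) : Mx (mscale c A) = c *: Mx A.
Proof. by apply/matrixP => i j; rewrite !mxE. Qed.

Lemma Mx_mid n : Mx (mid n) = 1%:M.
Proof. by apply/matrixP => i j; rewrite !mxE /mid; case: eqP => _; apply: erefl. Qed.

Lemma Mx_zero n : Mx (@zero_mx n) = 0.
Proof. by apply/matrixP => i j; rewrite !mxE. Qed.

Lemma Mx_mpow n (A : mx n) k : Mx (mpow A k) = Mx A ^+ k.
Proof. by elim: k => [|k IHk] /=; rewrite ?Mx_mid // Mx_mmul IHk exprS. Qed.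

Lemma Mx_block n (A B C D : mx n) :
  Mx (block A B C D) = block_mx (Mx A) (Mx B) (Mx C) (Mx D).
Proof.
apply/matrixP => i j; rewrite mxE /block.
case: (split_ordP i) => i' ->; case: (split_ordP j) => j' ->;
  by rewrite ?(block_mxEul, block_mxEur, block_mxEdl, block_mxEdr) !mxE
             ?(unsplitK (inl _ _)) ?(unsplitK (inr _ _)).
Qed.

Lemma Mx_blk12 n (X : mx (n + n)) : Mx (blk12 X) = ursubmx (Mx X).
Proof. by apply/matrixP => i j; rewrite !mxE. Qed.

Lemma Mx_blk22 n (X : mx (n + n)) : Mx (blk22 X) = drsubmx (Mx X).
Proof. by apply/matrixP => i j; rewrite !mxE. Qed.

Lemma mtr_mmul_sym_Mx n (F G : mx n) :
  (Mx F)^T *m Mx G = (Mx G)^T *m Mx F -> mmul (mtr F) G = mmul (mtr G) F.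
Proof.
(* Not [!Mx_mtr]: [mtr ?A] unifies with every matrix, so that rewrite loops. *)
by move=> FGsym; apply: Mx_inj; rewrite !Mx_mmul (Mx_mtr F) (Mx_mtr G).
Qed.

End MxOfFun.

Local Open Scope R_scope.

Lemma partial_derivative_sym ds df (K : vec ds -> mx df) dK i q :
  (forall q, mtr (K q) = K q) -> C1_mx K dK -> mtr (dK i q) = dK i q.
Proof.
move=> Ksym [Kder _]; apply: functional_extensionality => j.
apply: functional_extensionality => k.
apply: (uniqueness_limite (fun t => K (shift q i t) k j) 0); first exact: Kder.
have -> : (fun t => K (shift q i t) k j) = (fun t => K (shift q i t) j k).
  by apply: functional_extensionality => t; rewrite -[in RHS]Ksym.
exact: Kder.
Qed.

Section VerletTranslation.
Variables (d ds : nat) (eps : R) (K : vec ds -> mx d.+1) (dK : 'I_ds -> vec ds -> mx d.+1).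
Variables (h : R) (i : 'I_ds) (q : vec ds).

Lemma Mx_Amat :
  Mx (Amat eps K h q) = verletA h (h^2/2) (h^2/4) (Mx (amat eps K q)).
Proof. by rewrite /Amat /verletA Mx_block !(Mx_msub, Mx_mscale) Mx_mid RoppE. Qed.

Lemma Mx_Cmat :
  Mx (Cmat eps K h q) = verletC h (h^2/2) (h^2/4) (Mx (amat eps K q)).
Proof. by rewrite /Cmat /verletC Mx_block !(Mx_msub, Mx_mscale) Mx_mid RoppE. Qed.

Lemma Mx_Bmat :
  Mx (Bmat eps dK h i q) = verletB h (h^2/2) (h^3/4) (Mx (bmat eps dK i q)).
Proof. by rewrite /Bmat /verletB Mx_block !Mx_mscale !RoppE. Qed.

End VerletTranslation.

Theorem lemma3p6 (df ds : nat) (eps : R) (K : vec ds -> mx df)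
  (dK : 'I_ds -> vec ds -> mx df) (H : R) (n : nat) :
  (1 <= df)%nat -> (1 <= ds)%nat -> 0 < eps ->
  (forall q, spd (K q)) -> C1_mx K dK ->
  0 < H -> (1 <= n)%nat ->
  let h := H / 2 ^ n in
  forall (q : vec ds) (i : 'I_ds),
    mmul (mtr (F3 eps K dK h n i q)) (G2 eps K dK h n i q)
    = mmul (mtr (G2 eps K dK h n i q)) (F3 eps K dK h n i q).
Proof.
case: df K dK => [//|d] K dK _ _ _ Kspd KC1 _ _ h q i; clearbody h.
have Ksym q' : mtr (K q') = K q' by case: (Kspd q').
have asym : trmx (Mx (amat eps K q)) = Mx (amat eps K q).
  by rewrite -Mx_mtr; congr Mx; rewrite /amat -[in RHS]Ksym.
have bsym : trmx (Mx (bmat eps dK i q)) = Mx (bmat eps dK i q).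
  rewrite -Mx_mtr; congr Mx.
  by rewrite /bmat -[in RHS](partial_derivative_sym i q Ksym KC1).
have hE : h = h/2 + h/2 by lra.
have cE : h^2/2 = h * (h/2) by lra.
have dE : h^2/4 = h/2 * (h/2) by lra.
have eE : h^3/4 = h * (h/2) * (h/2) by lra.
apply: mtr_mmul_sym_Mx.
rewrite /F3 /G2 Mx_blk22 Mx_blk12 /bigP Mx_mpow /bigM Mx_block.
rewrite Mx_Amat Mx_Bmat Mx_Cmat Mx_zero.
apply/symplectic_corner_sym/symplecticX/symplectic_block_utri.
- exact: (verletC_tr_mulA asym hE cE dE).
- exact: (verletC_tr_mulB_sym asym hE cE dE eE bsym).
Qed.
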